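(* Let $G$ be either (a) the grid $P_3 \,\square\, P_n$ with $n\ge 3$, or (b) the grid $P_4\,\square\, P_n$ with $n\ge 4$. Then $$\gamma_t(G) \ge \left\lceil \frac{3\gamma(G)+2\gamma_c(G)}{6}\right\rceil.$$
   Context: All graphs are finite, simple and undirected. $P_m$ denotes the path on $m$ vertices. For graphs $G,H$, the Cartesian product $G\,\square\, H$ has vertex set $V(G)\times V(H)$, with $(u_1,v_1)$ adjacent to $(u_2,v_2)$ iff either $u_1=u_2$ and $v_1v_2\in E(H)$, or $v_1=v_2$ and $u_1u_2\in E(G)$. A set $S\subseteq V(G)$ is a dominating set if every vertex not in $S$ is adjacent to some vertex of $S$; $\gamma(G)$ is the minimum size of a dominating set. A set $S$ is a total dominating set if every vertex of $G$ (including those in $S$) is adjacent to some vertex of $S$; $\gamma_t(G)$ is the minimum size of a total dominating set. A set $S$ is a connected dominating set if it is dominating and the subgraph induced by $S$ is connected; $\gamma_c(G)$ is the minimum size of a connected dominating set. *)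

From mathcomp Require Import all_boot.
Set Implicit Arguments. Unset Strict Implicit. Unset Printing Implicit Defensive.

(* A simple graph is given by a vertex finType T and an adjacency relation
   adj : rel T (symmetric, irreflexive in all our uses). *)

Section Domination.
Variables (T : finType) (adj : rel T).

Definition dominating (S : {set T}) : bool :=
  [forall v, (v \notin S) ==> [exists u in S, adj v u]].

Definition total_dominating (S : {set T}) : bool :=
  [forall v, [exists u in S, adj v u]].

Definition induced_connected (S : {set T}) : bool :=
  [forall x in S, forall y in S,
     connect (fun u v => [&& u \in S, v \in S & adj u v]) x y].

Definition connected_dominating (S : {set T}) : bool :=
  dominating S && induced_connected S.

(* Minimum cardinality of a set satisfying P (defaults to #|T| if none). *)
Definition min_card (P : pred {set T}) : nat :=
  \big[minn/#|T|]_(S : {set T} | P S) #|S|.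

Definition gamma   := min_card dominating.
Definition gamma_t := min_card total_dominating.
Definition gamma_c := min_card connected_dominating.
End Domination.

Definition path_adj (m : nat) : rel 'I_m :=
  fun i j => (i.+1 == j :> nat) || (j.+1 == i :> nat).

Arguments path_adj m : clear implicits.

Definition cart_adj (A B : finType) (eA : rel A) (eB : rel B) : rel (A * B) :=
  fun x y => ((x.1 == y.1) && eB x.2 y.2) || ((x.2 == y.2) && eA x.1 y.1).

Definition grid_adj (m n : nat) : rel ('I_m * 'I_n) :=
  cart_adj (path_adj m) (path_adj n).
Arguments grid_adj m n : clear implicits.

From mathcomp Require Import all_boot zify.
Set Implicit Arguments. Unset Strict Implicit. Unset Printing Implicit Defensive.

(* Since gamma <= gamma_t, it suffices to show 2 gamma_c <= 3 gamma_t (up to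
   rounding).  Lower bounds on gamma_t come from a weighting of the vertices
   in which every open neighbourhood has weight at most c, so that a total
   dominating set has at least (total weight)/c vertices: rows weighted
   1,0,1 on P_3 [] P_n give gamma_t >= n, and rows weighted 2,1,1,2 on
   P_4 [] P_n give gamma_t >= 6n/5.  Upper bounds on gamma_c come from
   explicit sets: the middle row of P_3 [] P_n, and in P_4 [] P_n the second
   row together with teeth through rows 2 and 3 at every third column,
   of size about 5n/3. *)

Section MinCard.
Variables (T : finType) (P : pred {set T}).

Lemma min_card_leT : min_card P <= #|T|.
Proof.
rewrite /min_card; elim/big_ind: _ => // [x y Hx _|S _]; first by rewrite geq_min Hx.
exact: max_card.
Qed.

Lemma min_card_le S : P S -> min_card P <= #|S|.
Proof.
move=> PS; rewrite /min_card.
have: S \in index_enum {set T} by rewrite mem_index_enum.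
elim: (index_enum _) => [//|S' r IHr]; rewrite in_cons big_cons.
case/orP=> [/eqP<-|Sr]; first by rewrite PS geq_minl.
by case: (P S') => /=; rewrite ?geq_min IHr ?orbT.
Qed.

Lemma leq_min_cardM k b :
  b <= k * #|T| -> (forall S, P S -> b <= k * #|S|) -> b <= k * min_card P.
Proof.
move=> bT bP; rewrite /min_card; elim/big_ind: _ => // x y Hx Hy.
by rewrite /minn; case: ifP.
Qed.
End MinCard.

Lemma min_card_sub (T : finType) (P Q : pred {set T}) :
  (forall S, P S -> Q S) -> min_card Q <= min_card P.
Proof.
move=> PQ; rewrite -[min_card P]mul1n; apply: leq_min_cardM => [|S /PQ].
  by rewrite mul1n min_card_leT.
by rewrite mul1n; apply: min_card_le.
Qed.

Section Domination.
Variables (T : finType) (adj : rel T).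

Definition induced (S : {set T}) : rel T :=
  fun u v => [&& u \in S, v \in S & adj u v].

Lemma total_dominating_dominating S :
  total_dominating adj S -> dominating adj S.
Proof. by move=> /forallP tdS; apply/forallP=> v; apply/implyP. Qed.

Lemma gamma_le_gamma_t : gamma adj <= gamma_t adj.
Proof. by apply: min_card_sub; apply: total_dominating_dominating. Qed.

(* Double counting: every vertex has a neighbour in S, and each u in S is
   charged at most the weight of its open neighbourhood. *)
Lemma total_dominating_weight (w : T -> nat) c S :
  (forall u, \sum_(v | adj v u) w v <= c) -> total_dominating adj S ->
  \sum_v w v <= c * #|S|.
Proof.
move=> nbw tdS.
apply: (@leq_trans (\sum_v \sum_(u in S) w v * adj v u)).
  apply: leq_sum => v _.
  have /existsP [u /andP [uS vu]] := forallP tdS v.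
  by rewrite (bigD1 u) //= vu muln1 leq_addr.
rewrite exchange_big /= -sum1_card big_distrr /=.
apply: leq_sum => u _; rewrite muln1; apply: leq_trans (nbw u).
rewrite [X in _ <= X]big_mkcond /=.
by apply: leq_sum => v _; case: (adj v u); rewrite ?muln1 ?muln0.
Qed.

Lemma weight_le_gamma_t (w : T -> nat) c :
  (forall v, w v <= c) -> (forall u, \sum_(v | adj v u) w v <= c) ->
  \sum_v w v <= c * gamma_t adj.
Proof.
move=> wc nbw; apply: leq_min_cardM => [|S]; last exact: total_dominating_weight.
by rewrite -sum1_card big_distrr /=; apply: leq_sum => v _; rewrite muln1.
Qed.

Hypothesis adj_sym : symmetric adj.

Lemma connect_sym_induced S : connect_sym (induced S).
Proof. by apply: sym_connect_sym => u v; rewrite /induced adj_sym andbCA. Qed.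

Lemma induced_connected_root (S : {set T}) (r : T) :
  (forall x, x \in S -> connect (induced S) r x) -> induced_connected adj S.
Proof.
move=> rS; apply/forallP=> x; apply/implyP=> xS.
apply/forallP=> y; apply/implyP=> yS.
by apply: connect_trans (rS y yS); rewrite connect_sym_induced; apply: rS.
Qed.
End Domination.

Lemma path_adj_irr m (i : 'I_m) : ~~ path_adj m i i.
Proof. by rewrite /path_adj; lia. Qed.

Lemma path_adj_sym m : symmetric (path_adj m).
Proof. by move=> i j; rewrite /path_adj orbC. Qed.

Lemma grid_adj_sym m n : symmetric (grid_adj m n).
Proof.
by move=> u v; rewrite /grid_adj /cart_adj path_adj_sym [path_adj m _ _]path_adj_sym
  ![v.1 == _]eq_sym ![v.2 == _]eq_sym.
Qed.

Lemma grid_adj_row m n (i : 'I_m) (j j' : 'I_n) :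
  grid_adj m n (i, j) (i, j') = path_adj n j j'.
Proof. by rewrite /grid_adj /cart_adj /= eqxx (negbTE (path_adj_irr i)) andbF orbF. Qed.

Lemma grid_adj_col m n (i i' : 'I_m) (j : 'I_n) :
  grid_adj m n (i, j) (i', j) = path_adj m i i'.
Proof. by rewrite /grid_adj /cart_adj /= eqxx (negbTE (path_adj_irr j)) andbF. Qed.

Lemma card_path_adj m (i : 'I_m) : #|[pred i' | path_adj m i' i]| <= 2.
Proof.
rewrite cardE -(size_map (@nat_of_ord m)).
apply: (@uniq_leq_size _ _ [:: i.-1; i.+1]).
  by rewrite (map_inj_uniq (@ord_inj m)) enum_uniq.
by move=> _ /mapP [i' + ->]; rewrite mem_enum inE /path_adj !inE; lia.
Qed.

Lemma grid_row_weight_nb m n (wr : 'I_m -> nat) (u : 'I_m * 'I_n) :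
  \sum_(v | grid_adj m n v u) wr v.1 <=
  2 * wr u.1 + \sum_(i | path_adj m i u.1) wr i.
Proof.
apply: (@leq_trans (\sum_(v | (v.1 == u.1) && path_adj n v.2 u.2) wr v.1 +
                    \sum_(v | path_adj m v.1 u.1 && (v.2 == u.2)) wr v.1)).
  rewrite big_mkcond [X in _ <= X + _]big_mkcond [X in _ <= _ + X]big_mkcond.
  rewrite -big_split /=; apply: leq_sum => v _.
  rewrite /grid_adj /cart_adj [path_adj m _ _ && _]andbC.
  by case: (_ && _); case: (_ && _); rewrite /= ?leq_addr.
rewrite -(pair_big (pred1 u.1) (path_adj n ^~ u.2) (fun i _ => wr i)) /=.
rewrite -(pair_big (path_adj m ^~ u.1) (pred1 u.2) (fun i _ => wr i)) /=.
rewrite big_pred1_eq sum_nat_const leq_add //.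
  by rewrite leq_mul2r (card_path_adj u.2) orbT.
by apply: eq_leq; apply: eq_bigr => i _; rewrite big_pred1_eq.
Qed.

Lemma sum_row_weight m n (wr : 'I_m -> nat) :
  \sum_(v : 'I_m * 'I_n) wr v.1 = n * \sum_i wr i.
Proof.
rewrite -(pair_bigA _ (fun i _ => wr i)) big_distrr /=.
by apply: eq_bigr => i _; rewrite sum_nat_const card_ord.
Qed.

Lemma row_weight_le_gamma_t m n (wr : 'I_m -> nat) c :
  (forall i, 2 * wr i + \sum_(i' | path_adj m i' i) wr i' <= c) ->
  n * \sum_i wr i <= c * gamma_t (grid_adj m n).
Proof.
move=> nbw; rewrite -sum_row_weight; apply: weight_le_gamma_t => [v|u].
  by apply: leq_trans (nbw v.1); rewrite mul2n -addnn -addnA leq_addr.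
exact: leq_trans (grid_row_weight_nb wr u) (nbw u.1).
Qed.

Lemma gamma_t_P3 n : n <= gamma_t (grid_adj 3 n).
Proof.
suff: n * 2 <= 2 * gamma_t (grid_adj 3 n) by lia.
have := @row_weight_le_gamma_t 3 n (fun i => i != 1 :> nat) 2.
rewrite !big_ord_recl big_ord0; apply.
by case=> [[|[|[|k]]] Hi] //; rewrite big_mkcond !big_ord_recl big_ord0.
Qed.

Lemma gamma_t_P4 n : 6 * n <= 5 * gamma_t (grid_adj 4 n).
Proof.
rewrite mulnC.
have := @row_weight_le_gamma_t 4 n (fun i : 'I_4 => if val i \in [:: 0; 3] then 2 else 1) 5.
rewrite !big_ord_recl big_ord0; apply.
by case=> [[|[|[|[|k]]]] Hi] //; rewrite big_mkcond !big_ord_recl big_ord0.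
Qed.

Lemma card_grid_row m n (i : 'I_m) : #|[set v : 'I_m * 'I_n | v.1 == i]| = n.
Proof.
have -> : [set v : 'I_m * 'I_n | v.1 == i] = pair i @: [set: 'I_n].
  apply/setP=> -[i' j]; rewrite inE /=.
  by apply/eqP/imsetP=> [->|[j' _ [->]]] //; exists j; rewrite ?inE.
by rewrite card_imset ?cardsT ?card_ord // => j j' [].
Qed.

Lemma connect_grid_row m n (S : {set 'I_m * 'I_n}) (i : 'I_m) (j j' : 'I_n) :
  (forall j, (i, j) \in S) -> connect (induced (grid_adj m n) S) (i, j) (i, j').
Proof.
move=> rowS; wlog le_jj' : j j' / j <= j'.
  move=> wlog_le; case: (leqP j j') => [/wlog_le //|/ltnW/wlog_le].
  by rewrite connect_sym_induced //; apply: grid_adj_sym.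
have from_j d (lt_jd : j + d < n) :
    connect (induced (grid_adj m n) S) (i, j) (i, Ordinal lt_jd).
  elim: d lt_jd => [|d IHd] lt_jd.
    by rewrite (_ : Ordinal lt_jd = j) //; apply: val_inj; rewrite /= addn0.
  have lt_jd' : j + d < n by lia.
  apply: connect_trans (IHd lt_jd') (connect1 _).
  by rewrite /induced !rowS grid_adj_row /path_adj /= addnS eqxx.
have lt_jj' : j + (j' - j) < n by rewrite subnKC.
by rewrite (_ : j' = Ordinal lt_jj') //; apply: val_inj; rewrite /= subnKC.
Qed.

Definition mid3 : 'I_3 := Ordinal (isT : 1 < 3).

Lemma gamma_c_P3 n : gamma_c (grid_adj 3 n) <= n.
Proof.
case: n => [|n]; first by apply: leq_trans (min_card_leT _) _; rewrite card_prod !card_ord.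
set row := [set v : 'I_3 * 'I_n.+1 | v.1 == mid3].
apply: (@leq_trans #|row|); last by rewrite card_grid_row.
apply: min_card_le; apply/andP; split.
  apply/forallP=> -[i j]; apply/implyP; rewrite inE /= => i_mid.
  apply/existsP; exists (mid3, j); rewrite inE eqxx grid_adj_col /path_adj /=.
  by case: i i_mid => [[|[|[|k]]] lt_i].
apply: (@induced_connected_root _ _ (@grid_adj_sym 3 n.+1) _ (mid3, ord0)) => -[i j].
rewrite inE /= => /eqP ->; apply: connect_grid_row => j'.
by rewrite inE.
Qed.

Lemma card_pair_set m n (P : 'I_m -> 'I_n -> bool) :
  #|[set v : 'I_m * 'I_n | P v.1 v.2]| = \sum_i \sum_j (P i j : nat).
Proof.
rewrite (pair_bigA _ (fun i j => (P i j : nat))) -sum1_card big_mkcond /=.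
by apply: eq_bigr => v _; rewrite inE.
Qed.

Lemma sum_mod3_eq1 n : \sum_(j < n) (j %% 3 == 1 : nat) = (n + 1) %/ 3.
Proof.
rewrite -(big_mkord xpredT (fun j => (j %% 3 == 1 : nat))).
elim: n => [|n IHn]; first by rewrite big_geq.
by rewrite big_nat_recr //= IHn; case: eqP; lia.
Qed.

Lemma sum_pred_le1 n (P : pred nat) k :
  (forall j, P j -> j = k) -> \sum_(j < n) (P j : nat) <= 1.
Proof.
move=> Pk; rewrite -big_mkcond sum1_card /=; apply/card_le1_eqP=> j j'.
by rewrite !unfold_in => /Pk j_k /Pk j'_k; apply: val_inj; rewrite /= j_k j'_k.
Qed.

(* Row 1 is the spine, the teeth run down rows 2 and 3 at the columns
   j = 1 (mod 3); when n = 1 (mod 3) the last column is out of reach of the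
   teeth, and the vertex (3, n - 2) next to the last tooth is added. *)
Definition comb4 n : {set 'I_4 * 'I_n} :=
  [set v : 'I_4 * 'I_n | (v.1 == 1 :> nat) || (1 < v.1) && (v.2 %% 3 == 1)
           || (v.1 == 3 :> nat) && (n %% 3 == 1) && (v.2.+2 == n)].

Lemma card_comb4 n : 3 * #|comb4 n| <= 5 * n + 2.
Proof.
rewrite (card_pair_set (fun (i : 'I_4) (j : 'I_n) =>
  (i == 1 :> nat) || (1 < i) && (j %% 3 == 1)
  || (i == 3 :> nat) && (n %% 3 == 1) && (j.+2 == n))).
rewrite !big_ord_recl big_ord0 /= big1 // sum_nat_const card_ord.
under eq_bigr => j _ do rewrite orbF.
have row3 : \sum_(j < n) ((j %% 3 == 1) || (n %% 3 == 1) && (j.+2 == n) : nat)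
            <= (n + 1) %/ 3 + (n %% 3 == 1).
  apply: (@leq_trans (\sum_(j < n)
    ((j %% 3 == 1 : nat) + ((n %% 3 == 1) && (j.+2 == n) : nat)))).
    by apply: leq_sum => j _; case: (_ %% 3 == 1); case: (_ && _).
  rewrite big_split /= sum_mod3_eq1 leq_add2l.
  case: (n %% 3 == 1); last by rewrite big1.
  by apply: (@sum_pred_le1 n (fun j => j.+2 == n) n.-2) => j /eqP <-.
move: row3; rewrite sum_mod3_eq1; set s := \sum_(j < n) _.
case: (n %% 3 =P 1); lia.
Qed.

Definition spine4 : 'I_4 := Ordinal (isT : 1 < 4).

Lemma comb4_dominating n : 1 < n -> dominating (grid_adj 4 n) (comb4 n).
Proof.
move=> lt1n; apply/forallP=> -[[[|[|[|[|k]]]] lt_i] j] //; apply/implyP;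
  rewrite inE /= => notS; apply/existsP.
- by exists (spine4, j); rewrite inE eqxx grid_adj_col.
- by [].
- by exists (spine4, j); rewrite inE eqxx grid_adj_col.
have lt_jn := ltn_ord j.
have [next | prev] := boolP ((j %% 3 == 0) && (j.+1 < n)).
  have lt_j1 : j.+1 < n by case/andP: next.
  exists (Ordinal lt_i, Ordinal lt_j1); rewrite inE grid_adj_row /path_adj /=.
  lia.
have lt_jm1 : j.-1 < n by lia.
exists (Ordinal lt_i, Ordinal lt_jm1); rewrite inE grid_adj_row /path_adj /=.
lia.
Qed.

Lemma comb4_connected n : induced_connected (grid_adj 4 n) (comb4 n).
Proof.
case: n => [|n]; first by apply/forallP=> x; have := ltn_ord x.2.
set E := induced (grid_adj 4 n.+1) (comb4 n.+1).
have spine j : connect E (spine4, ord0) (spine4, j).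
  by apply: connect_grid_row => j'; rewrite inE.
have tooth (i : 'I_4) (j : 'I_n.+1) :
    1 < i -> j %% 3 == 1 -> connect E (spine4, ord0) (i, j).
  move=> lt1i j1; pose row2 : 'I_4 := Ordinal (isT : 2 < 4).
  have to_row2 : connect E (spine4, ord0) (row2, j).
    apply: connect_trans (spine j) (connect1 _).
    by rewrite /E /induced !inE /= j1 grid_adj_col.
  case: i lt1i => [[|[|[|[|k]]]] lt_i] // _.
    by rewrite (bool_irrelevance lt_i isT).
  apply: connect_trans to_row2 (connect1 _).
  by rewrite /E /induced !inE /= j1 grid_adj_col.
apply: (@induced_connected_root _ _ (@grid_adj_sym 4 n.+1) _ (spine4, ord0)).
move=> -[i j]; rewrite inE /=.
case/orP=> [/orP [i1 | /andP [lt1i j1]] | /andP [/andP [i3 n1] jn]].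
- by rewrite (_ : i = spine4) //; apply: val_inj; apply/eqP.
- exact: tooth.
have lt_jm1 : j.-1 < n.+1 by lia.
have jm1 : Ordinal lt_jm1 %% 3 == 1 by rewrite /=; lia.
apply: connect_trans (tooth i _ _ jm1) (connect1 _); first by lia.
by rewrite /E /induced !inE /= jm1 i3 n1 jn grid_adj_row /path_adj /=; lia.
Qed.

Lemma gamma_c_P4 n : 1 < n -> 3 * gamma_c (grid_adj 4 n) <= 5 * n + 2.
Proof.
move=> lt1n; apply: leq_trans (card_comb4 n); rewrite leq_mul2l /=.
by apply: min_card_le; rewrite /connected_dominating comb4_dominating ?comb4_connected.
Qed.

Theorem proposition2p16 (m n : nat) :
  (m = 3 /\ 3 <= n) \/ (m = 4 /\ 4 <= n) ->
  (3 * gamma (grid_adj m n) + 2 * gamma_c (grid_adj m n) + 5) %/ 6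
    <= gamma_t (grid_adj m n).
Proof.
case=> [[-> _] | [-> le4n]].
  have := gamma_le_gamma_t (grid_adj 3 n).
  have := gamma_t_P3 n; have := gamma_c_P3 n; lia.
have lt1n : 1 < n by lia.
have := gamma_le_gamma_t (grid_adj 4 n).
have := gamma_t_P4 n; have := gamma_c_P4 lt1n; lia.
Qed.
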